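(* In any execution of Algorithm FS (with $T\ge 4$), let $v,w$ be active neighboring nodes in round $t$. (i) If $c_t(v)=c_t(w)+1$, then $w$ does not induce $v$ in round $t$. (ii) If $c_t(v)=c_t(w)$, then $w$ does not induce $v$ in round $t$.
   Context: Model (beeping model with arbitrary activations). $G=(V,E)$ finite connected undirected graph; synchronous rounds; in each round each active node either beeps or listens; a listening node learns only whether at least one neighbor beeped. $T\ge 4$ is an integer; checkpoints $\mathit{CP}=\{c\in\mathbb{N}_0: c\equiv 0\pmod 4,\ T-c>3\}$. Algorithm FS. Each node $v$ stores $\delta(v)\in\{0,\dots,T-1\}$, $\mathit{State}(v)\in\{\mathit{Inactive},\mathit{Beep},\mathit{Listen}\}$, $\mathit{Induced}(v)\in\{\mathit{true},\mathit{false}\}$. Initially all nodes are Inactive. A node $v$ is activated in round $t$ if the adversary activates it in round $t$, or $v$ is inactive and some neighbor beeps in round $t-1$; then at the beginning of round $t$, $\delta(v)=1$, $\mathit{State}(v)=\mathit{Beep}$, $\mathit{Induced}(v)=\mathit{true}$. In each round each active node $v$, according to its state at the beginning of the round: (1) if $\mathit{State}(v)=\mathit{Beep}$: beeps; $\delta(v)\gets\delta(v)+1\bmod T$; $\mathit{State}(v)\gets\mathit{Listen}$; (2) if $\mathit{State}(v)=\mathit{Listen}$ and some neighbor beeps: if $\delta(v)\equiv c-1\pmod T$ for some $c\in\mathit{CP}$, then $\delta(v)\gets\delta(v)+2\bmod T$, $\mathit{State}(v)\gets\mathit{Beep}$, $\mathit{Induced}(v)\gets\mathit{true}$; else $\delta(v)\gets\delta(v)+1\bmod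 T$; (3) if $\mathit{State}(v)=\mathit{Listen}$ and no neighbor beeps: $\delta(v)\gets\delta(v)+1\bmod T$; then if ($\mathit{Induced}(v)=\mathit{true}$ and new $\delta(v)\in\mathit{CP}$) or new $\delta(v)=0$: $\mathit{State}(v)\gets\mathit{Beep}$, $\mathit{Induced}(v)\gets\mathit{false}$. We say $w$ \emph{induces} $v$ in round $t$ if $w\in N(v)$ beeps in round $t$ and $v$ executes the first branch of rule (2) in round $t$. Virtual counter: if $v$ is activated in round $t_0$ then $c_{t_0}(v)=0$, and $c_{t+1}(v)=c_t(v)+a$, where $a\in\{1,2\}$ is the amount added to $\delta(v)$ (before reduction mod $T$) in round $t$. *)

From mathcomp Require Import all_boot.
Set Implicit Arguments. Unset Strict Implicit. Unset Printing Implicit Defensive.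

Inductive phase := PBeep | PListen.

(* Local state of a node: Inactive, or Active with
   delta(v) (kept in {0,...,T-1}), State(v), Induced(v), and the
   virtual counter c(v) (a ghost variable, not used by the algorithm). *)
Inductive nstate :=
| Inactive
| Active (delta : nat) (st : phase) (induced : bool) (c : nat).

Definition inCP (T c : nat) : bool := (c %% 4 == 0) && (c + 3 < T).

(* delta = c - 1 (mod T) for some c in CP
   (every c in CP is < T, so ranging over iota 0 T covers all of CP). *)
Definition before_CP (T d : nat) : bool :=
  has (fun c => inCP T c && (d.+1 == c %[mod T])) (iota 0 T).

Definition beeps (s : nstate) : bool :=
  if s is Active _ PBeep _ _ then true else false.

Definition is_active (s : nstate) : bool :=
  if s is Active _ _ _ _ then true else false.

(* State right after activation (at the beginning of the activation round). *)
Definition activated : nstate := Active 1 PBeep true 0.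

Definition fs_trans (T : nat) (s : nstate) (heard : bool) : nstate :=
  match s with
  | Inactive => Inactive
  | Active d PBeep ind c => Active (d.+1 %% T) PListen ind c.+1
  | Active d PListen ind c =>
      if heard then
        if before_CP T d then Active (d.+2 %% T) PBeep true c.+2
        else Active (d.+1 %% T) PListen ind c.+1
      else
        let d' := d.+1 %% T in
        if (ind && inCP T d') || (d' == 0) then Active d' PBeep false c.+1
        else Active d' PListen ind c.+1
  end.

Section Exec.
Variables (V : finType) (e : rel V) (T : nat) (adv : nat -> V -> bool).

Definition heard (s : V -> nstate) (v : V) : bool :=
  [exists u, e v u && beeps (s u)].

(* cfg t v = state of v at the beginning of round t (after activations of
   round t).  adv t v = the adversary activates v in round t. *)
Fixpoint cfg (t : nat) : V -> nstate :=
  match t with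
  | 0 => fun v => if adv 0 v then activated else Inactive
  | t'.+1 => fun v =>
      let s := cfg t' in
      let p := fs_trans T (s v) (heard s v) in
      if p is Inactive then
        (if adv t v || heard s v then activated else Inactive)
      else p
  end.

Definition vcounter (t : nat) (v : V) : nat :=
  if cfg t v is Active _ _ _ c then c else 0.

Definition induces (t : nat) (w v : V) : Prop :=
  e v w /\ beeps (cfg t w) /\
  exists d ind c, cfg t v = Active d PListen ind c /\ before_CP T d.
End Exec.

Definition simple_connected_graph (V : finType) (e : rel V) : Prop :=
  symmetric e /\ irreflexive e /\ (forall u v : V, connect e u v).

(* The argument is local and rests on an invariant of every node state that
   Algorithm FS can reach (for T >= 4):
   - an active node satisfies delta = (c + 1) mod T, c its virtual counter;
   - a node in state Beep has delta mod 4 in {0, 1} and delta + 2 < T.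
   Suppose w beeps, v listens with delta(v) just before a checkpoint cp
   (cp a multiple of 4 with cp + 3 < T), and c(v) = c(w) + k with k <= 1.
   The invariant gives delta(v) = delta(w) + k < T, hence
   delta(w) + k + 1 = cp and delta(w) mod 4 = 3 - k, which is 2 or 3:
   this contradicts the Beep part of the invariant. *)

From mathcomp Require Import all_boot.
From mathcomp Require Import zify.

Set Implicit Arguments.
Unset Strict Implicit.
Unset Printing Implicit Defensive.

Definition fs_inv (T : nat) (s : nstate) : Prop :=
  match s with
  | Inactive => True
  | Active d st _ c => d = c.+1 %% T /\ (st = PBeep -> d %% 4 <= 1 /\ d + 2 < T)
  end.

Lemma before_CP_witness (T d : nat) : before_CP T d ->
  exists cp, [/\ cp %% 4 = 0, cp + 3 < T & d.+1 %% T = cp].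
Proof.
move=> /hasP [cp _ /andP [/andP [/eqP cp4 cpT] /eqP dcp]].
by exists cp; split=> //; rewrite dcp modn_small //; lia.
Qed.

(* One round of the algorithm preserves the invariant; T >= 4 ensures that a
   node entering Beep at delta = 0 still satisfies delta + 2 < T. *)
Lemma fs_trans_inv (T : nat) (s : nstate) (h : bool) : 4 <= T ->
  fs_inv T s -> fs_inv T (fs_trans T s h).
Proof.
move=> leT; case: s => [|d st ind c] //= [-> beepP].
have next1 : (c.+1 %% T).+1 %% T = c.+2 %% T by rewrite -addn1 modnDml addn1.
case: st beepP => beepP /=; first by [].
case: h.
- case before: (before_CP T (c.+1 %% T)) => //=.
  have [cp [cp4 cpT dcp]] := before_CP_witness before.
  have at_cp : c.+2 %% T = cp by rewrite -next1.
  have next2 : (c.+1 %% T).+2 %% T = c.+3 %% T by rewrite -addn2 modnDml addn2.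
  have at_cp1 : c.+3 %% T = cp.+1.
    by rewrite -addn1 -modnDml at_cp addn1 modn_small //; lia.
  by rewrite next2 at_cp1; split=> // _; lia.
- rewrite next1; case: ifP => //= goesBeep; split=> // _.
  by case/orP: goesBeep => [/andP [_ /andP [/eqP ? ?]] | /eqP ->]; lia.
Qed.

Lemma cfg_inv (V : finType) (e : rel V) (T : nat) (adv : nat -> V -> bool)
    (t : nat) (v : V) :
  4 <= T -> fs_inv T (cfg e T adv t v).
Proof.
move=> leT; elim: t v => [|t IH] v /=.
  by case: (adv 0 v) => //=; split=> //; rewrite modn_small //; lia.
have := fs_trans_inv (heard e (cfg e T adv t) v) leT (IH v).
case: (fs_trans _ _ _) => [|d st ind c] //= _.
by case: ifP => //= _; split=> //; rewrite modn_small //; lia.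
Qed.

Lemma beep_not_before_CP (T dw k : nat) :
  dw %% 4 <= 1 -> dw + 2 < T -> k <= 1 -> ~~ before_CP T (dw + k).
Proof.
move=> dw4 dwT k1; apply/negP => /before_CP_witness [cp [cp4 cpT]].
by rewrite modn_small; lia.
Qed.

Definition ncounter (s : nstate) : nat :=
  if s is Active _ _ _ c then c else 0.

Lemma not_induced_within_one (T k d c : nat) (ind : bool) (sw : nstate) :
  fs_inv T (Active d PListen ind c) -> fs_inv T sw -> beeps sw -> k <= 1 ->
  c = ncounter sw + k -> ~~ before_CP T d.
Proof.
case: sw => [|dw [] indw cw] //= [-> _] [dw_eq /(_ erefl) [dw4 dwT]] _ k1 ->.
have -> : (cw + k).+1 %% T = dw + k.
  by rewrite -addSn -modnDml -dw_eq modn_small //; lia.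
exact: beep_not_before_CP.
Qed.

(* Lemma 6. *)
Theorem mainTheorem6 (V : finType) (e : rel V) (T : nat)
  (adv : nat -> V -> bool) :
  simple_connected_graph e -> 4 <= T ->
  forall (t : nat) (v w : V),
    e v w ->
    is_active (cfg e T adv t v) -> is_active (cfg e T adv t w) ->
    (vcounter e T adv t v = (vcounter e T adv t w).+1 ->
       ~ induces e T adv t w v) /\
    (vcounter e T adv t v = vcounter e T adv t w ->
       ~ induces e T adv t w v).
Proof.
move=> _ leT t v w _ _ _.
have no_induction k : k <= 1 ->
    vcounter e T adv t v = vcounter e T adv t w + k -> ~ induces e T adv t w v.
  move=> k1 cnt [_ [w_beeps [d [ind [c [v_eq before]]]]]].
  have v_inv := cfg_inv e adv t v leT; rewrite v_eq in v_inv.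
  have cnt_c : c = ncounter (cfg e T adv t w) + k.
    by move: cnt; rewrite /vcounter v_eq.
  by move: before; apply/negP;
    apply: not_induced_within_one v_inv (cfg_inv e adv t w leT) w_beeps k1 cnt_c.
by split=> cnt; [apply: (no_induction 1) | apply: (no_induction 0)];
  rewrite // ?addn1 ?addn0.
Qed.
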